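(* Let $u_l<u_r$ and let $v_l,v_r,w_l,w_r,z_l,z_r\in\mathbb{R}$. For $0<\epsilon<1$ define on $\mathbb{R}\times(0,\infty)$ the piecewise smooth function $U^\epsilon=(u_\epsilon,v_\epsilon,w_\epsilon,z_\epsilon)$ by $$U^\epsilon(x,t)=\begin{cases}(u_l,v_l,w_l,z_l), & x<(u_l-\epsilon)t,\\ \big(u_l,0,\frac{v_l^2}{2\epsilon},\frac{v_lw_l}{\epsilon}\big), & (u_l-\epsilon)t<x<u_lt,\\ \big(\frac{x}{t},0,0,0\big), & u_lt<x<u_rt,\\ \big(u_r,0,-\frac{v_r^2}{2\epsilon},-\frac{v_rw_r}{\epsilon}\big), & u_rt<x<(u_r+\epsilon)t,\\ (u_r,v_r,w_r,z_r), & x>(u_r+\epsilon)t.\end{cases}$$ Then, as $\epsilon\to0$, each of $\partial_tu_\epsilon+\partial_x(u_\epsilon^2/2)$, $\partial_tv_\epsilon+\partial_x(u_\epsilon v_\epsilon)$, $\partial_tw_\epsilon+\partial_x(v_\epsilon^2/2+u_\epsilon w_\epsilon)$, $\partial_tz_\epsilon+\partial_x(v_\epsilon w_\epsilon+u_\epsilon z_\epsilon)$ tends to $0$ in $\mathcal{D}'(\mathbb{R}\times(0,\infty))$, and $U^\epsilon\to(u,v,w,z)$ in $\mathcal{D}'(\mathbb{R}\times(0,\infty))$, where $u=u_l$ for $x<u_lt$, $u=x/t$ for $u_lt<x<u_rt$, $u=u_r$ for $x>u_rt$; $v=v_l$ for $x<u_lt$, $v=0$ for $u_lt<x<u_rt$,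 $v=v_r$ for $x>u_rt$; and $$w=w_lH(u_lt-x)+w_rH(x-u_rt)+\tfrac{v_l^2}{2}t\,\delta_{x=u_lt}-\tfrac{v_r^2}{2}t\,\delta_{x=u_rt},$$ $$z=z_lH(u_lt-x)+z_rH(x-u_rt)+v_lw_l t\,\delta_{x=u_lt}-v_rw_r t\,\delta_{x=u_rt}.$$ Thus $(u,v,w,z)$ is a shadow wave solution of the system $u_t+(u^2/2)_x=0$, $v_t+(uv)_x=0$, $w_t+(v^2/2+uw)_x=0$, $z_t+(vw+uz)_x=0$ with Riemann data $(u_l,v_l,w_l,z_l)$ for $x<0$, $(u_r,v_r,w_r,z_r)$ for $x>0$. Moreover it is entropy admissible: for every pair $\eta(u,v,w,z)=\bar\eta(u)+c_1v+c_2w+c_3z$, $q(u,v,w,z)=\bar q(u)+c_1uv+c_2(\frac{v^2}{2}+uw)+c_3(vw+uz)$ with $\bar\eta$ smooth convex, $\bar q'(u)=u\bar\eta'(u)$ and $c_1,c_2,c_3\in\mathbb{R}$, one has $\liminf_{\epsilon\to0}\int_0^\infty\!\int_{\mathbb{R}}\big(\eta(U^\epsilon)\phi_t+q(U^\epsilon)\phi_x\big)\,dx\,dt\ge0$ for every nonnegative $\phi\in C_c^\infty(\mathbb{R}\times(0,\infty))$. *)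

From Stdlib Require Import Reals.
Open Scope R_scope.

Definition continuous2 (f : R -> R -> R) : Prop :=
  forall x t eps, 0 < eps -> exists d, 0 < d /\
    forall y s, Rabs (y - x) < d -> Rabs (s - t) < d ->
      Rabs (f y s - f x t) < eps.

Definition is_dx (f fx : R -> R -> R) : Prop :=
  forall x t, derivable_pt_lim (fun y => f y t) x (fx x t).
Definition is_dt (f ft : R -> R -> R) : Prop :=
  forall x t, derivable_pt_lim (fun s => f x s) t (ft x t).

CoInductive smooth2 (f : R -> R -> R) : Prop :=
  | smooth2_intro : forall fx ft : R -> R -> R,
      continuous2 f -> is_dx f fx -> is_dt f ft ->
      smooth2 fx -> smooth2 ft -> smooth2 f.

CoInductive smooth1 (f : R -> R) : Prop :=
  | smooth1_intro : forall f' : R -> R,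
      (forall x, derivable_pt_lim f x (f' x)) -> smooth1 f' -> smooth1 f.

Definition convex (f : R -> R) : Prop :=
  forall x y l, 0 <= l <= 1 ->
    f (l * x + (1 - l) * y) <= l * f x + (1 - l) * f y.

Definition test_fun (phi : R -> R -> R) : Prop :=
  smooth2 phi /\
  exists a b T1 T2, 0 < T1 /\
    forall x t, (x < a \/ b < x \/ t < T1 \/ T2 < t) -> phi x t = 0.

Definition int_ab (f : R -> R) (a b I : R) : Prop :=
  exists pr : Riemann_integrable f a b, RiemannInt pr = I.

Definition int_pos (g : R -> R) (I : R) : Prop :=
  exists T1 T2, 0 < T1 /\ T1 < T2 /\
    (forall t, 0 < t -> (t < T1 \/ T2 < t) -> g t = 0) /\
    int_ab g T1 T2 I.

Definition dbl_int (F : R -> R -> R) (I : R) : Prop :=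
  exists a b T1 T2, a < b /\ 0 < T1 /\ T1 < T2 /\
    (forall x t, 0 < t -> (x < a \/ b < x \/ t < T1 \/ T2 < t) -> F x t = 0) /\
    exists g : R -> R,
      (forall t, T1 <= t <= T2 -> int_ab (fun x => F x t) a b (g t)) /\
      int_ab g T1 T2 I.

Definition tends (I : R -> R) (L : R) : Prop :=
  forall eta, 0 < eta -> exists d, 0 < d /\
    forall e, 0 < e -> e < d -> e < 1 -> Rabs (I e - L) < eta.

Definition liminf_nonneg (I : R -> R) : Prop :=
  forall eta, 0 < eta -> exists d, 0 < d /\
    forall e, 0 < e -> e < d -> e < 1 -> - eta < I e.

(* d_t c_e + d_x f_e -> 0 in D'(R x (0,oo)):
   int int (c_e phi_t + f_e phi_x) dx dt -> 0 for every test phi *)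
Definition residual_to0 (c f : R -> R -> R -> R) : Prop :=
  forall phi phix phit, test_fun phi -> is_dx phi phix -> is_dt phi phit ->
    exists I : R -> R,
      (forall e, 0 < e < 1 ->
         dbl_int (fun x t => c e x t * phit x t + f e x t * phix x t) (I e)) /\
      tends I 0.

(* c_e -> T in D'(R x (0,oo)), where Tpair phi L means <T, phi> = L *)
Definition dconv (c : R -> R -> R -> R) (Tpair : (R -> R -> R) -> R -> Prop)
  : Prop :=
  forall phi, test_fun phi ->
    exists (I : R -> R) (L : R),
      (forall e, 0 < e < 1 -> dbl_int (fun x t => c e x t * phi x t) (I e)) /\
      Tpair phi L /\ tends I L.

Definition fun_pair (g : R -> R -> R) (phi : R -> R -> R) (L : R) : Prop :=
  dbl_int (fun x t => g x t * phi x t) L.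

(* pairing with  g + a t delta_{x = cl t} + b t delta_{x = cr t},
   where <t delta_{x=ct}, phi> = int_0^oo t phi(ct,t) dt *)
Definition fun_delta_pair (g : R -> R -> R) (a cl b cr : R)
  (phi : R -> R -> R) (L : R) : Prop :=
  exists A B C,
    dbl_int (fun x t => g x t * phi x t) A /\
    int_pos (fun t => t * phi (cl * t) t) B /\
    int_pos (fun t => t * phi (cr * t) t) C /\
    L = A + a * B + b * C.

Definition Heav (x : R) : R := if Rlt_dec 0 x then 1 else 0.

(* selects the value in the five regions
   x < (ul-e)t, (ul-e)t <= x < ul t, ul t <= x < ur t,
   ur t <= x < (ur+e) t, x >= (ur+e) t
   (values on the separating lines are immaterial) *)
Definition pw5 (ul ur e x t : R) (A B C D E : R) : R :=
  if Rlt_dec x ((ul - e) * t) then A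
  else if Rlt_dec x (ul * t) then B
  else if Rlt_dec x (ur * t) then C
  else if Rlt_dec x ((ur + e) * t) then D
  else E.

Definition u_eps (ul ur : R) (e x t : R) : R :=
  pw5 ul ur e x t ul ul (x / t) ur ur.
Definition v_eps (ul ur vl vr : R) (e x t : R) : R :=
  pw5 ul ur e x t vl 0 0 0 vr.
Definition w_eps (ul ur vl vr wl wr : R) (e x t : R) : R :=
  pw5 ul ur e x t wl (vl ^ 2 / (2 * e)) 0 (- (vr ^ 2 / (2 * e))) wr.
Definition z_eps (ul ur vl vr wl wr zl zr : R) (e x t : R) : R :=
  pw5 ul ur e x t zl (vl * wl / e) 0 (- (vr * wr / e)) zr.

Definition u_lim (ul ur x t : R) : R :=
  if Rlt_dec x (ul * t) then ul else if Rlt_dec x (ur * t) then x / t else ur.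
Definition v_lim (ul ur vl vr x t : R) : R :=
  if Rlt_dec x (ul * t) then vl else if Rlt_dec x (ur * t) then 0 else vr.
Definition w_reg (ul ur wl wr x t : R) : R :=
  wl * Heav (ul * t - x) + wr * Heav (x - ur * t).
Definition z_reg (ul ur zl zr x t : R) : R :=
  zl * Heav (ul * t - x) + zr * Heav (x - ur * t).

(* In the self-similar variables (xi, t), the pairing of d_t eta(U^e) + d_x q(U^e)
   with a test function phi reduces, for every entropy pair (eta, q), to one term
   per separating ray: the Rankine-Hugoniot defect of (eta, q) across the ray
   times int phi(xi t, t) dt.  The defects vanish across x = ul t and x = ur t and
   are O(e) across the two outer rays, so all residuals and the entropy production
   tend to 0.  Likewise the pairing of U^e with phi is a combination of the masses
   M(s) of phi on the sectors 0 < x/t < s; the amplitudes of order 1/e on sectors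
   of width e turn difference quotients of M into M'(s) = int t phi(s t, t) dt,
   which is the pairing of phi with t delta_{x = s t}. *)

From Stdlib Require Import Reals Lra FunctionalExtensionality.
From Coquelicot Require Import Coquelicot.
Open Scope R_scope.

(** * Continuity in two variables *)

Definition continuity_2d (f : R -> R -> R) : Prop :=
  forall x y, continuity_2d_pt f x y.

Lemma continuity_2d_of_continuous2 f : continuous2 f -> continuity_2d f.
Proof.
  intros H x y eps. destruct (H x y eps (cond_pos eps)) as [d [Hd Hd']].
  exists (mkposreal d Hd). intros u v Hu Hv. apply Hd'; assumption.
Qed.

Lemma continuity_2d_swap f : continuity_2d f -> continuity_2d (fun u v => f v u).
Proof.
  intros H x y eps. destruct (H y x eps) as [d Hd].
  exists d. intros u v Hu Hv. apply Hd; assumption.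
Qed.

Lemma continuity_2d_plus f g :
  continuity_2d f -> continuity_2d g -> continuity_2d (fun u v => f u v + g u v).
Proof. intros Hf Hg x y. apply continuity_2d_pt_plus; auto. Qed.

Lemma continuity_2d_minus f g :
  continuity_2d f -> continuity_2d g -> continuity_2d (fun u v => f u v - g u v).
Proof. intros Hf Hg x y. apply continuity_2d_pt_minus; auto. Qed.

Lemma continuity_2d_mult f g :
  continuity_2d f -> continuity_2d g -> continuity_2d (fun u v => f u v * g u v).
Proof. intros Hf Hg x y. apply continuity_2d_pt_mult; auto. Qed.

Lemma continuity_2d_const c : continuity_2d (fun _ _ => c).
Proof. intros x y. apply continuity_2d_pt_const. Qed.

Lemma continuity_2d_fst : continuity_2d (fun u _ => u).
Proof. intros x y. apply continuity_2d_pt_id1. Qed.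

Lemma continuity_2d_snd : continuity_2d (fun _ v => v).
Proof. intros x y. apply continuity_2d_pt_id2. Qed.

Lemma continuity_2d_of_fst (g : R -> R) :
  (forall z, continuity_pt g z) -> continuity_2d (fun u _ => g u).
Proof.
  intros Hg x y. apply (continuity_1d_2d_pt_comp g (fun u _ => u)); auto.
  apply continuity_2d_pt_id1.
Qed.

Lemma continuity_2d_ray f : continuity_2d f -> continuity_2d (fun u v => f (u * v) v).
Proof.
  intros H x y eps. destruct (H (x * y) y eps) as [d Hd].
  set (K := Rabs x + Rabs y + 2).
  assert (HK : 0 < K) by (unfold K; pose proof (Rabs_pos x); pose proof (Rabs_pos y); lra).
  assert (Hm : 0 < Rmin 1 (d / K))
    by (apply Rmin_pos; [lra | apply Rdiv_lt_0_compat; [apply cond_pos | exact HK]]).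
  exists (mkposreal _ Hm). simpl. intros u v Hu Hv.
  pose proof (Rmin_l 1 (d / K)); pose proof (Rmin_r 1 (d / K)).
  set (m := Rmin 1 (d / K)) in *.
  assert (HmK : m * K <= d).
  { apply Rle_trans with (d / K * K); [apply Rmult_le_compat_r; lra | right; field; lra]. }
  apply Hd; [| unfold K in HmK; pose proof (Rabs_pos x); pose proof (Rabs_pos y); nra].
  replace (u * v - x * y) with (u * (v - y) + (u - x) * y) by ring.
  assert (Hu' : Rabs u <= Rabs x + 1).
  { replace u with (x + (u - x)) by ring. eapply Rle_trans; [apply Rabs_triang | lra]. }
  eapply Rle_lt_trans; [apply Rabs_triang |]. rewrite !Rabs_mult.
  pose proof (Rabs_pos (v - y)); pose proof (Rabs_pos (u - x)); pose proof (Rabs_pos u).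
  pose proof (Rabs_pos y).
  apply Rle_lt_trans with ((Rabs x + 1) * m + m * Rabs y).
  - apply Rplus_le_compat; [apply Rmult_le_compat | apply Rmult_le_compat_r]; lra.
  - unfold K in HmK. pose proof (Rabs_pos x). nra.
Qed.

Lemma continuity_pt_fst f x y : continuity_2d_pt f x y -> continuity_pt (fun u => f u y) x.
Proof.
  intros H. apply continuity_pt_filterlim. intros P [eps HP].
  destruct (H eps) as [d Hd]. exists d. intros u Hu. apply HP.
  apply Hd; [exact Hu | rewrite Rminus_diag, Rabs_R0; apply cond_pos].
Qed.

Lemma continuity_pt_const_fun c z : continuity_pt (fun _ : R => c) z.
Proof. apply continuity_pt_const. intros ? ?. reflexivity. Qed.

Ltac continuity_2d := repeat first
  [ apply continuity_2d_minus | apply continuity_2d_plus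
  | apply continuity_2d_mult | apply continuity_2d_const | apply continuity_2d_fst
  | apply continuity_2d_snd | apply continuity_2d_ray
  | (apply continuity_2d_of_fst; solve [auto]) | assumption ].

(* Coquelicot states many equalities in the carrier of a normed module, where
   [field] does not recognise them as equalities in R. *)
Ltac field_R := match goal with |- ?x = ?y => change (@eq R x y); field end.

(** * Derivatives and Riemann integrals *)

Lemma differentiable_pt_lim_of_partials f fx ft x y :
  continuity_2d fx -> continuity_2d ft -> is_dx f fx -> is_dt f ft ->
  differentiable_pt_lim f x y (fx x y) (ft x y).
Proof.
  intros Cx Ct Dx Dt eps.
  assert (He2 : 0 < eps / 2) by (pose proof (cond_pos eps); lra).
  destruct (Cx x y (mkposreal _ He2)) as [d1 H1].
  destruct (Ct x y (mkposreal _ He2)) as [d2 H2].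
  assert (Hd : 0 < Rmin d1 d2) by (apply Rmin_pos; apply cond_pos).
  exists (mkposreal _ Hd). simpl. intros u v Hu Hv.
  pose proof (Rmin_l d1 d2); pose proof (Rmin_r d1 d2).
  destruct (MVT_cor4 (fun z => f z v) (fun z => fx z v) x (Rabs (u - x)))
    with (b := u) as [c [Hc1 Hc2]].
  { intros c _. apply is_derive_Reals, Dx. }
  { lra. }
  destruct (MVT_cor4 (fun z => f x z) (fun z => ft x z) y (Rabs (v - y)))
    with (b := v) as [c' [Hc1' Hc2']].
  { intros c' _. apply is_derive_Reals, Dt. }
  { lra. }
  simpl in *.
  assert (E1 : Rabs (fx c v - fx x y) < eps / 2) by (apply H1; lra).
  assert (E2 : Rabs (ft x c' - ft x y) < eps / 2).
  { apply H2; [rewrite Rminus_diag, Rabs_R0; apply cond_pos | lra]. }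
  replace (f u v - f x y - (fx x y * (u - x) + ft x y * (v - y))) with
    ((fx c v - fx x y) * (u - x) + (ft x c' - ft x y) * (v - y))
    by (replace (f u v - f x y) with ((f u v - f x v) + (f x v - f x y)) by ring;
        rewrite Hc1, Hc1'; ring).
  eapply Rle_trans; [apply Rabs_triang |]. rewrite !Rabs_mult.
  pose proof (Rmax_l (Rabs (u - x)) (Rabs (v - y))).
  pose proof (Rmax_r (Rabs (u - x)) (Rabs (v - y))).
  pose proof (Rabs_pos (fx c v - fx x y)); pose proof (Rabs_pos (ft x c' - ft x y)).
  pose proof (Rabs_pos (u - x)); pose proof (Rabs_pos (v - y)).
  apply Rle_trans with (eps / 2 * Rmax (Rabs (u - x)) (Rabs (v - y)) +
                        eps / 2 * Rmax (Rabs (u - x)) (Rabs (v - y))).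
  - apply Rplus_le_compat; apply Rmult_le_compat; lra.
  - lra.
Qed.

Lemma is_derive_ray f fx ft xi t :
  continuity_2d fx -> continuity_2d ft -> is_dx f fx -> is_dt f ft ->
  is_derive (fun s => f (xi * s) s) t (xi * fx (xi * t) t + ft (xi * t) t).
Proof.
  intros Cx Ct Dx Dt. apply is_derive_Reals.
  replace (xi * fx (xi * t) t + ft (xi * t) t) with
    (fx (xi * t) t * xi + ft (xi * t) t * 1) by ring.
  apply (derivable_pt_lim_comp_2d f (fun s => xi * s) (fun s => s)).
  - apply differentiable_pt_lim_of_partials; auto.
  - apply is_derive_Reals. auto_derive; auto; ring.
  - apply derivable_pt_lim_id.
Qed.

Lemma ex_RInt_of_continuity_2d K a b t :
  continuity_2d K -> ex_RInt (fun xi => K xi t) a b.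
Proof.
  intros C. apply (@ex_RInt_continuous R_CompleteNormedModule). intros z _.
  apply continuity_pt_filterlim, continuity_pt_fst, C.
Qed.

Lemma ex_RInt_of_continuity_2d_snd K a b xi :
  continuity_2d K -> ex_RInt (fun t => K xi t) a b.
Proof.
  intros C. apply (ex_RInt_of_continuity_2d (fun t xi => K xi t)).
  apply continuity_2d_swap, C.
Qed.

Lemma RInt_param_continuous K a b t :
  continuity_2d K -> continuous (fun s => RInt (fun xi => K xi s) a b) t.
Proof.
  intros C.
  assert (Hle : forall a b, a <= b -> continuous (fun s => RInt (fun xi => K xi s) a b) t).
  { clear a b. intros a b Hab. apply continuity_pt_filterlim. intros eps Heps.
    assert (He : 0 < eps / (b - a + 1)) by (apply Rdiv_lt_0_compat; lra).
    destruct (uniform_continuity_2d_1d K a b t (fun x _ => C x t) (mkposreal _ He))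
      as [d Hd].
    exists d. split; [apply cond_pos |]. intros s [_ Hs]. simpl in *. unfold R_dist in *.
    rewrite <- (RInt_minus (V := R_CompleteNormedModule))
      by (apply ex_RInt_of_continuity_2d; auto).
    apply Rle_lt_trans with ((b - a) * (eps / (b - a + 1))).
    - apply abs_RInt_le_const; [exact Hab | |].
      + apply (ex_RInt_minus (V := R_NormedModule)); apply ex_RInt_of_continuity_2d; auto.
      + intros z Hz. left. pose proof (cond_pos d). apply Rabs_def2 in Hs.
        apply (Hd z t z s); try lra.
        rewrite Rminus_diag, Rabs_R0. apply cond_pos.
    - apply Rlt_le_trans with ((b - a + 1) * (eps / (b - a + 1))).
      + apply Rmult_lt_compat_r; lra.
      + right. field. lra. }
  destruct (Rle_lt_dec a b) as [Hab | Hba]; [apply Hle; exact Hab |].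
  apply continuous_ext with (fun s => opp (RInt (fun xi => K xi s) b a)).
  - intros s. rewrite <- (opp_RInt_swap (V := R_CompleteNormedModule))
      by (apply ex_RInt_of_continuity_2d; auto).
    apply (opp_opp (G := R_AbelianGroup)).
  - apply (continuous_opp (V := R_NormedModule)). apply Hle. lra.
Qed.

Lemma is_derive_RInt_param_2d K dK a b t :
  (forall s, ex_RInt (fun xi => K xi s) a b) -> continuity_2d dK ->
  (forall xi s, is_derive (fun s => K xi s) s (dK xi s)) ->
  is_derive (fun s => RInt (fun xi => K xi s) a b) t (RInt (fun xi => dK xi t) a b).
Proof.
  intros Ex CD D.
  replace (RInt (fun xi => dK xi t) a b)
    with (RInt (fun xi => Derive (fun u => K xi u) t) a b)
    by (apply RInt_ext; intros x _; apply is_derive_unique, D).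
  apply (is_derive_RInt_param (fun s xi => K xi s) a b t).
  - apply filter_forall. intros x0 xi _. eexists. apply D.
  - intros xi _. apply continuity_2d_pt_ext with (f := fun u v => dK v u).
    + intros u v. symmetry. apply is_derive_unique, D.
    + apply continuity_2d_swap, CD.
  - apply filter_forall. exact Ex.
Qed.

Lemma RInt_RInt_derive_snd K dK al be T1 T2 :
  continuity_2d K -> continuity_2d dK ->
  (forall xi s, is_derive (fun s => K xi s) s (dK xi s)) ->
  RInt (fun t => RInt (fun xi => dK xi t) al be) T1 T2
  = RInt (fun xi => K xi T2) al be - RInt (fun xi => K xi T1) al be.
Proof.
  intros CK CdK DK. apply is_RInt_unique.
  apply (is_RInt_derive (V := R_CompleteNormedModule)
           (fun t => RInt (fun xi => K xi t) al be)).
  - intros x _. apply is_derive_RInt_param_2d; auto.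
    intros s. apply ex_RInt_of_continuity_2d, CK.
  - intros x _. apply RInt_param_continuous, CdK.
Qed.

Lemma ex_RInt_RInt_param K al be T1 T2 :
  continuity_2d K -> ex_RInt (fun t => RInt (fun xi => K xi t) al be) T1 T2.
Proof.
  intros C. apply (@ex_RInt_continuous R_CompleteNormedModule). intros z _.
  apply RInt_param_continuous, C.
Qed.

Lemma continuity_pt_of_is_derive (f df : R -> R) :
  (forall x, is_derive f x (df x)) -> forall z, continuity_pt f z.
Proof.
  intros H z. apply derivable_continuous_pt. exists (df z). apply is_derive_Reals, H.
Qed.

Lemma int_ab_of_is_RInt f a b I : is_RInt f a b I -> int_ab f a b I.
Proof.
  intros H. exists (ex_RInt_Reals_0 f a b (ex_intro _ I H)).
  rewrite <- RInt_Reals. apply is_RInt_unique, H.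
Qed.

Lemma RInt_eq_0 (f : R -> R) a b :
  (forall x, Rmin a b < x < Rmax a b -> f x = 0) -> RInt f a b = 0.
Proof.
  intros H. rewrite (RInt_ext f (fun _ => 0)) by exact H.
  rewrite RInt_const. apply Rmult_0_r.
Qed.

Lemma is_RInt_trim f c a b d I : c <= a -> a <= b -> b <= d ->
  (forall x, c < x < a -> f x = 0) -> (forall x, b < x < d -> f x = 0) ->
  is_RInt f c d I -> is_RInt f a b I.
Proof.
  intros Hca Hab Hbd Hl Hr H.
  assert (Ecb : ex_RInt f c b).
  { apply (ex_RInt_Chasles_1 (V := R_CompleteNormedModule)) with d; [lra | exists I; exact H]. }
  assert (Ebd : ex_RInt f b d).
  { apply (ex_RInt_Chasles_2 (V := R_CompleteNormedModule)) with c; [lra | exists I; exact H]. }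
  assert (Eca : ex_RInt f c a).
  { apply (ex_RInt_Chasles_1 (V := R_CompleteNormedModule)) with b; [lra | exact Ecb]. }
  assert (Eab : ex_RInt f a b).
  { apply (ex_RInt_Chasles_2 (V := R_CompleteNormedModule)) with c; [lra | exact Ecb]. }
  replace I with (RInt f a b); [apply (RInt_correct (V := R_CompleteNormedModule)), Eab |].
  rewrite <- (is_RInt_unique _ _ _ _ H).
  rewrite <- (RInt_Chasles f c b d), <- (RInt_Chasles f c a b) by assumption.
  rewrite (RInt_eq_0 f c a), (RInt_eq_0 f b d).
  - assert (Hzero : forall r : R, r = 0 + r + 0) by (intro; ring). apply Hzero.
  - rewrite Rmin_left, Rmax_right by lra. exact Hr.
  - rewrite Rmin_left, Rmax_right by lra. exact Hl.
Qed.

Lemma is_RInt_rescale (F : R -> R) s0 s5 t I : 0 < t ->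
  is_RInt (fun xi => t * F (xi * t)) s0 s5 I -> is_RInt F (s0 * t) (s5 * t) I.
Proof.
  intros Ht H.
  apply is_RInt_ext with (fun y => scal (/ t) (t * F ((/ t * y + 0) * t))).
  { intros y _. unfold scal; simpl; unfold mult; simpl.
    replace ((/ t * y + 0) * t) with y by (field; lra). field. lra. }
  apply (is_RInt_comp_lin (fun xi => t * F (xi * t)) (/ t) 0 (s0 * t) (s5 * t)).
  replace (/ t * (s0 * t) + 0) with s0 by (field; lra).
  replace (/ t * (s5 * t) + 0) with s5 by (field; lra). exact H.
Qed.

Lemma is_RInt_piece (P : R -> R -> R) (f : R -> R) al be t :
  al <= be -> continuity_2d P -> (forall xi, al < xi < be -> f xi = P xi t) ->
  is_RInt f al be (RInt (fun xi => P xi t) al be).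
Proof.
  intros Hab C H. apply is_RInt_ext with (fun xi => P xi t).
  - intros x Hx. rewrite Rmin_left, Rmax_right in Hx by lra. symmetry. apply H, Hx.
  - apply (RInt_correct (V := R_CompleteNormedModule)), ex_RInt_of_continuity_2d, C.
Qed.

(** * Limits as e -> 0 *)

Lemma tends_ext f g L :
  (forall e, 0 < e < 1 -> f e = g e) -> tends g L -> tends f L.
Proof.
  intros H T eta Heta. destruct (T eta Heta) as [d [Hd Hd']].
  exists d. split; auto. intros e H1 H2 H3. rewrite H by lra. auto.
Qed.

Lemma tends_const c : tends (fun _ => c) c.
Proof.
  intros eta Heta. exists 1. split; [lra |]. intros. rewrite Rminus_diag, Rabs_R0. auto.
Qed.

Lemma tends_id : tends (fun e => e) 0.
Proof.
  intros eta Heta. exists eta. split; [lra |]. intros e ? ? ?.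
  rewrite Rminus_0_r, Rabs_pos_eq; lra.
Qed.

Lemma tends_plus f g L M : tends f L -> tends g M -> tends (fun e => f e + g e) (L + M).
Proof.
  intros Tf Tg eta Heta.
  destruct (Tf (eta / 2)) as [d1 [Hd1 H1]]; [lra |].
  destruct (Tg (eta / 2)) as [d2 [Hd2 H2]]; [lra |].
  exists (Rmin d1 d2). split; [apply Rmin_pos; auto |].
  intros e He1 He2 He3. pose proof (Rmin_l d1 d2); pose proof (Rmin_r d1 d2).
  specialize (H1 e He1 ltac:(lra) He3). specialize (H2 e He1 ltac:(lra) He3).
  replace (f e + g e - (L + M)) with ((f e - L) + (g e - M)) by ring.
  eapply Rle_lt_trans; [apply Rabs_triang | lra].
Qed.

Lemma tends_mult f g L M : tends f L -> tends g M -> tends (fun e => f e * g e) (L * M).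
Proof.
  intros Tf Tg eta Heta.
  set (K := Rabs L + Rabs M + 1).
  assert (HK : 0 < K) by (unfold K; pose proof (Rabs_pos L); pose proof (Rabs_pos M); lra).
  set (r := Rmin 1 (eta / (2 * K))).
  assert (Hr : 0 < r) by (apply Rmin_pos; [lra | apply Rdiv_lt_0_compat; lra]).
  assert (HrK : r * K <= eta / 2).
  { apply Rle_trans with (eta / (2 * K) * K);
      [apply Rmult_le_compat_r; [lra | apply Rmin_r] | right; field; lra]. }
  destruct (Tf r Hr) as [d1 [Hd1 H1]]. destruct (Tg r Hr) as [d2 [Hd2 H2]].
  exists (Rmin d1 d2). split; [apply Rmin_pos; auto |].
  intros e He1 He2 He3. pose proof (Rmin_l d1 d2); pose proof (Rmin_r d1 d2).
  specialize (H1 e He1 ltac:(lra) He3). specialize (H2 e He1 ltac:(lra) He3).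
  assert (Hr1 : r <= 1) by apply Rmin_l.
  replace (f e * g e - L * M) with ((f e - L) * (g e - M) + (f e - L) * M + L * (g e - M))
    by ring.
  eapply Rle_lt_trans; [apply Rabs_triang |].
  eapply Rle_lt_trans; [apply Rplus_le_compat_r, Rabs_triang |]. rewrite !Rabs_mult.
  pose proof (Rabs_pos (f e - L)); pose proof (Rabs_pos (g e - M)).
  pose proof (Rabs_pos L); pose proof (Rabs_pos M).
  assert (Rabs (f e - L) * Rabs (g e - M) <= r * Rabs (g e - M)) by nra.
  assert (Rabs (f e - L) * Rabs M <= r * Rabs M) by nra.
  assert (Rabs L * Rabs (g e - M) <= Rabs L * r) by nra.
  assert (r * Rabs (g e - M) <= r * 1) by nra.
  unfold K in HrK. nra.
Qed.

Lemma tends_scal k f L : tends f L -> tends (fun e => k * f e) (k * L).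
Proof. intros Tf. apply (tends_mult (fun _ => k)); [apply tends_const | exact Tf]. Qed.

Lemma tends_minus f g L M : tends f L -> tends g M -> tends (fun e => f e - g e) (L - M).
Proof.
  intros Tf Tg. replace (L - M) with (L + -1 * M) by ring.
  apply (tends_ext _ (fun e => f e + -1 * g e)); [intros; ring |].
  apply tends_plus, tends_scal; assumption.
Qed.

Lemma tends_diff_quotient_right P x l :
  is_derive P x l -> tends (fun e => (P (x + e) - P x) / e) l.
Proof.
  intros D. apply is_derive_Reals in D. intros eta Heta.
  destruct (D eta Heta) as [d Hd]. exists d. split; [apply cond_pos |].
  intros e ? ? ?. apply Hd; [lra | rewrite Rabs_pos_eq; lra].
Qed.

Lemma tends_diff_quotient_left P x l :
  is_derive P x l -> tends (fun e => (P x - P (x - e)) / e) l.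
Proof.
  intros D. apply is_derive_Reals in D. intros eta Heta.
  destruct (D eta Heta) as [d Hd]. exists d. split; [apply cond_pos |].
  intros e ? ? ?.
  replace ((P x - P (x - e)) / e) with ((P (x + - e) - P x) / - e)
    by (replace (x + - e) with (x - e) by ring; field; lra).
  apply Hd; [lra | rewrite Rabs_Ropp, Rabs_pos_eq; lra].
Qed.

Lemma tends_shift P x k : continuity_pt P x -> tends (fun e => P (x + k * e)) (P x).
Proof.
  intros C eta Heta. destruct (C eta Heta) as [d [Hd H]].
  exists (d / (Rabs k + 1)). split.
  { apply Rdiv_lt_0_compat; [lra | pose proof (Rabs_pos k); lra]. }
  intros e ? ? ?. destruct (Req_dec k 0) as [-> | Hk].
  { rewrite Rmult_0_l, Rplus_0_r, Rminus_diag, Rabs_R0. exact Heta. }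
  apply H. split; [unfold D_x, no_cond; split; [auto | nra] |].
  simpl. unfold R_dist. replace (x + k * e - x) with (k * e) by ring.
  rewrite Rabs_mult, (Rabs_pos_eq e) by lra. pose proof (Rabs_pos k).
  apply Rle_lt_trans with ((Rabs k + 1) * e); [nra |].
  apply Rlt_le_trans with ((Rabs k + 1) * (d / (Rabs k + 1)));
    [apply Rmult_lt_compat_l; lra | right; field; lra].
Qed.

Lemma tends_shadow_masses M W ul ur s0 s5 A beta delta E :
  (forall s, is_derive M s (W s)) ->
  tends (fun e => A * (M (ul - e) - M s0) + beta / e * (M ul - M (ul - e))
                  + delta / e * (M (ur + e) - M ur) + E * (M s5 - M (ur + e)))
        (A * (M ul - M s0) + beta * W ul + delta * W ur + E * (M s5 - M ur)).
Proof.
  intros DM. pose proof (continuity_pt_of_is_derive M W DM) as CM.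
  apply (tends_ext _ (fun e => A * (M (ul + -1 * e) - M s0)
                              + beta * ((M ul - M (ul - e)) / e)
                              + delta * ((M (ur + e) - M ur) / e)
                              + E * (M s5 - M (ur + 1 * e)))).
  { intros e He. replace (ul + -1 * e) with (ul - e) by ring.
    replace (ur + 1 * e) with (ur + e) by ring. field. lra. }
  repeat apply tends_plus; apply tends_scal.
  - apply tends_minus; [apply tends_shift, CM | apply tends_const].
  - apply tends_diff_quotient_left, DM.
  - apply tends_diff_quotient_right, DM.
  - apply tends_minus; [apply tends_const | apply tends_shift, CM].
Qed.

Lemma liminf_nonneg_of_tends I : tends I 0 -> liminf_nonneg I.
Proof.
  intros T eta Heta. destruct (T eta Heta) as [d [Hd H]]. exists d. split; auto.
  intros e ? ? ?. specialize (H e ltac:(assumption) ltac:(assumption) ltac:(assumption)).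
  rewrite Rminus_0_r in H. apply Rabs_def2 in H. lra.
Qed.

(** * Test functions and integrals over fans of rays *)

Set Implicit Arguments.

Record test_fun_on (phi phix phit : R -> R -> R) (a b T1 T2 : R) : Prop := {
  tf_ab : a < b;
  tf_T1 : 0 < T1;
  tf_T12 : T1 < T2;
  tf_cont : continuity_2d phi;
  tf_cont_dx : continuity_2d phix;
  tf_cont_dt : continuity_2d phit;
  tf_dx : is_dx phi phix;
  tf_dt : is_dt phi phit;
  tf_supp : forall x t, (x <= a \/ b <= x \/ t <= T1 \/ T2 <= t) ->
    phi x t = 0 /\ phix x t = 0 /\ phit x t = 0 }.

Unset Implicit Arguments.

Arguments tf_supp {phi phix phit a b T1 T2} _ x t.

Lemma derivable_pt_lim_locally_zero (f : R -> R) x r :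
  0 < r -> (forall y, Rabs (y - x) < r -> f y = 0) -> derivable_pt_lim f x 0.
Proof.
  intros Hr H eps Heps. exists (mkposreal r Hr). intros h Hh0 Hh. simpl in Hh.
  rewrite (H (x + h)) by (replace (x + h - x) with h by ring; exact Hh).
  rewrite (H x) by (rewrite Rminus_diag, Rabs_R0; exact Hr).
  replace ((0 - 0) / h - 0) with 0 by (field; exact Hh0). rewrite Rabs_R0. exact Heps.
Qed.

(* The support rectangle is enlarged by a margin on which phi vanishes
   identically, so that the partials of phi vanish on its closed complement. *)
Lemma test_fun_onE phi phix phit :
  test_fun phi -> is_dx phi phix -> is_dt phi phit ->
  exists a b T1 T2, test_fun_on phi phix phit a b T1 T2.
Proof.
  intros [[fx ft Cphi Dfx Dft Sfx Sft] [a0 [b0 [S1 [S2 [HS1 Hz]]]]]] Dx Dt.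
  assert (Ex : phix = fx).
  { extensionality x; extensionality t. eapply uniqueness_limite; [apply Dx | apply Dfx]. }
  assert (Et : phit = ft).
  { extensionality x; extensionality t. eapply uniqueness_limite; [apply Dt | apply Dft]. }
  subst fx ft.
  destruct Sfx, Sft.
  exists (a0 - 1), (Rmax a0 b0 + 1), (S1 / 2), (Rmax S1 S2 + 1).
  pose proof (Rmax_l a0 b0); pose proof (Rmax_r a0 b0).
  pose proof (Rmax_l S1 S2); pose proof (Rmax_r S1 S2).
  constructor; try lra; try (apply continuity_2d_of_continuous2; assumption); auto.
  intros x t Hxt. split; [apply Hz; lra | split].
  - eapply uniqueness_limite; [apply Dx |].
    apply derivable_pt_lim_locally_zero with 1; [lra |].
    intros y Hy. apply Rabs_def2 in Hy. apply Hz. lra.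
  - eapply uniqueness_limite; [apply Dt |].
    apply derivable_pt_lim_locally_zero with (Rmin 1 (S1 / 2)); [apply Rmin_pos; lra |].
    intros s Hs. apply Rabs_def2 in Hs. apply Hz.
    pose proof (Rmin_l 1 (S1 / 2)); pose proof (Rmin_r 1 (S1 / 2)).
    destruct Hxt as [? | [? | [? | ?]]];
      [left | right; left | right; right; left | do 3 right]; lra.
Qed.

Lemma test_funE phi : test_fun phi ->
  exists phix phit a b T1 T2, test_fun_on phi phix phit a b T1 T2.
Proof.
  intros Htf. pose proof Htf as [[fx ft _ Dx Dt _ _] _].
  destruct (test_fun_onE phi fx ft Htf Dx Dt) as [a [b [T1 [T2 T]]]].
  exists fx, ft, a, b, T1, T2. exact T.
Qed.

Lemma fan_bounds a b T1 T2 L U : 0 < T1 -> T1 < T2 ->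
  exists s0 s5, s0 < L /\ U < s5 /\
    forall t, T1 <= t <= T2 -> s0 * t < a /\ b < s5 * t.
Proof.
  intros H1 H2.
  exists (- (Rabs a / T1) - Rabs L - 1), (Rabs b / T1 + Rabs U + 1).
  pose proof (Rabs_pos a); pose proof (Rabs_pos b); pose proof (Rabs_pos L).
  pose proof (Rabs_pos U); pose proof (Rle_abs L); pose proof (Rle_abs U).
  pose proof (Rle_abs b); pose proof (Rabs_maj2 a); pose proof (Rabs_maj2 L).
  assert (0 <= Rabs a / T1) by (apply Rdiv_le_0_compat; lra).
  assert (0 <= Rabs b / T1) by (apply Rdiv_le_0_compat; lra).
  split; [lra | split; [lra |]].
  intros t Ht.
  assert (Rabs a <= Rabs a / T1 * t).
  { apply Rle_trans with (Rabs a / T1 * T1);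
      [right; field; lra | apply Rmult_le_compat_l; lra]. }
  assert (Rabs b <= Rabs b / T1 * t).
  { apply Rle_trans with (Rabs b / T1 * T1);
      [right; field; lra | apply Rmult_le_compat_l; lra]. }
  assert (0 <= Rabs L * t) by (apply Rmult_le_pos; lra).
  assert (0 <= Rabs U * t) by (apply Rmult_le_pos; lra).
  split.
  - replace ((- (Rabs a / T1) - Rabs L - 1) * t) with (- (Rabs a / T1 * t) - Rabs L * t - t)
      by ring. lra.
  - replace ((Rabs b / T1 + Rabs U + 1) * t) with (Rabs b / T1 * t + Rabs U * t + t)
      by ring. lra.
Qed.

(* the flux through the ray x = xi t, i.e. seen from a frame moving at speed xi *)
Definition relative_flux (q eta : R -> R) (xi : R) : R := q xi - xi * eta xi.

(* What every entropy pair satisfies along a smooth self-similar solution U(x/t):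
   d/dxi q(U xi) = xi d/dxi eta(U xi). *)
Definition self_similar_pair (eta q : R -> R) : Prop :=
  exists eta', forall xi, is_derive eta xi (eta' xi) /\ is_derive q xi (xi * eta' xi).

Lemma self_similar_pair_const k l : self_similar_pair (fun _ => k) (fun _ => l).
Proof.
  exists (fun _ => 0). intros xi. split; [apply is_derive_Reals, derivable_pt_lim_const |].
  rewrite Rmult_0_r. apply is_derive_Reals, derivable_pt_lim_const.
Qed.

Lemma self_similar_pair_continuous eta q : self_similar_pair eta q ->
  (forall z, continuity_pt eta z) /\ (forall z, continuity_pt q z).
Proof.
  intros [eta' Hd]. split.
  - apply (continuity_pt_of_is_derive eta eta'). intros; apply Hd.
  - apply (continuity_pt_of_is_derive q (fun xi => xi * eta' xi)). intros; apply Hd.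
Qed.

Lemma dbl_int_val F I J : dbl_int F I -> I = J -> dbl_int F J.
Proof. intros H <-. exact H. Qed.

Section Fan.

Variables (phi phix phit : R -> R -> R) (a b T1 T2 : R).
Hypothesis T : test_fun_on phi phix phit a b T1 T2.

Let Hab : a < b := tf_ab T.
Let HT1 : 0 < T1 := tf_T1 T.
Let HT12 : T1 < T2 := tf_T12 T.
Let Cphi : continuity_2d phi := tf_cont T.
Let Cphix : continuity_2d phix := tf_cont_dx T.
Let Cphit : continuity_2d phit := tf_cont_dt T.

Definition ray_integral (s : R) : R := RInt (fun t => phi (s * t) t) T1 T2.

Definition weighted_ray_integral (s : R) : R := RInt (fun t => t * phi (s * t) t) T1 T2.

(* the integral of g (x / t) phi (x, t) over the fan al < x / t < be *)
Definition fan_integral (g : R -> R) (al be : R) : R :=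
  RInt (fun t => RInt (fun xi => t * (g xi * phi (xi * t) t)) al be) T1 T2.

Definition fan_mass (s : R) : R :=
  RInt (fun t => RInt (fun xi => t * phi (xi * t) t) 0 s) T1 T2.

Lemma dbl_int_of_fan F s0 s5 G I :
  (forall t, T1 <= t <= T2 -> s0 * t < a /\ b < s5 * t) ->
  (forall x t, 0 < t -> (x < a \/ b < x \/ t < T1 \/ T2 < t) -> F x t = 0) ->
  (forall t, T1 <= t <= T2 -> is_RInt (fun xi => t * F (xi * t) t) s0 s5 (G t)) ->
  is_RInt G T1 T2 I -> dbl_int F I.
Proof.
  intros Hs HF HG HI.
  exists a, b, T1, T2. split; [exact Hab |]. split; [exact HT1 |]. split; [exact HT12 |].
  split; [exact HF |].
  exists G. split; [| apply int_ab_of_is_RInt, HI].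
  intros t Ht. destruct (Hs t Ht). apply int_ab_of_is_RInt.
  apply (is_RInt_trim _ (s0 * t) a b (s5 * t)); try lra.
  - intros x Hx. apply HF; lra.
  - intros x Hx. apply HF; lra.
  - apply (is_RInt_rescale (fun y => F y t)); [lra | apply HG, Ht].
Qed.

Lemma fan_decomposition F s0 s1 s2 s3 s4 s5 P1 P2 P3 P4 P5 :
  s0 <= s1 -> s1 <= s2 -> s2 <= s3 -> s3 <= s4 -> s4 <= s5 ->
  (forall t, T1 <= t <= T2 -> s0 * t < a /\ b < s5 * t) ->
  (forall x t, 0 < t -> (x < a \/ b < x \/ t < T1 \/ T2 < t) -> F x t = 0) ->
  continuity_2d P1 -> continuity_2d P2 -> continuity_2d P3 ->
  continuity_2d P4 -> continuity_2d P5 ->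
  (forall t xi, T1 <= t <= T2 -> s0 < xi < s1 -> t * F (xi * t) t = P1 xi t) ->
  (forall t xi, T1 <= t <= T2 -> s1 < xi < s2 -> t * F (xi * t) t = P2 xi t) ->
  (forall t xi, T1 <= t <= T2 -> s2 < xi < s3 -> t * F (xi * t) t = P3 xi t) ->
  (forall t xi, T1 <= t <= T2 -> s3 < xi < s4 -> t * F (xi * t) t = P4 xi t) ->
  (forall t xi, T1 <= t <= T2 -> s4 < xi < s5 -> t * F (xi * t) t = P5 xi t) ->
  dbl_int F (RInt (fun t => RInt (fun xi => P1 xi t) s0 s1) T1 T2
           + RInt (fun t => RInt (fun xi => P2 xi t) s1 s2) T1 T2
           + RInt (fun t => RInt (fun xi => P3 xi t) s2 s3) T1 T2
           + RInt (fun t => RInt (fun xi => P4 xi t) s3 s4) T1 T2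
           + RInt (fun t => RInt (fun xi => P5 xi t) s4 s5) T1 T2).
Proof.
  intros H01 H12 H23 H34 H45 Hs HF C1 C2 C3 C4 C5 E1 E2 E3 E4 E5.
  apply (dbl_int_of_fan F s0 s5
    (fun t => RInt (fun xi => P1 xi t) s0 s1 + RInt (fun xi => P2 xi t) s1 s2
            + RInt (fun xi => P3 xi t) s2 s3 + RInt (fun xi => P4 xi t) s3 s4
            + RInt (fun xi => P5 xi t) s4 s5)); [exact Hs | exact HF | |].
  - intros t Ht. set (f := fun xi => t * F (xi * t) t).
    apply (is_RInt_Chasles f s0 s4 s5);
      [| apply is_RInt_piece; [lra | exact C5 | intros; apply E5; assumption]].
    apply (is_RInt_Chasles f s0 s3 s4);
      [| apply is_RInt_piece; [lra | exact C4 | intros; apply E4; assumption]].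
    apply (is_RInt_Chasles f s0 s2 s3);
      [| apply is_RInt_piece; [lra | exact C3 | intros; apply E3; assumption]].
    apply (is_RInt_Chasles f s0 s1 s2).
    + apply is_RInt_piece; [lra | exact C1 | intros; apply E1; assumption].
    + apply is_RInt_piece; [lra | exact C2 | intros; apply E2; assumption].
  - apply (is_RInt_plus (V := R_NormedModule)); [apply (is_RInt_plus (V := R_NormedModule)) |];
      [apply (is_RInt_plus (V := R_NormedModule)) | |];
      [apply (is_RInt_plus (V := R_NormedModule)) | | |].
    all: apply (RInt_correct (V := R_CompleteNormedModule)), ex_RInt_RInt_param; assumption.
Qed.

Lemma is_derive_fan_weight (eta : R -> R) xi s :
  is_derive (fun s => s * eta xi * phi (xi * s) s) s
    (eta xi * (phi (xi * s) s + s * (xi * phix (xi * s) s + phit (xi * s) s))).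
Proof.
  apply is_derive_Reals.
  replace (eta xi * (phi (xi * s) s + s * (xi * phix (xi * s) s + phit (xi * s) s)))
    with (eta xi * phi (xi * s) s + s * eta xi * (xi * phix (xi * s) s + phit (xi * s) s))
    by ring.
  apply (derivable_pt_lim_mult (fun s => s * eta xi) (fun s => phi (xi * s) s)).
  - apply is_derive_Reals. auto_derive; [exact I | ring].
  - apply is_derive_Reals, is_derive_ray;
      [exact Cphix | exact Cphit | apply (tf_dx T) | apply (tf_dt T)].
Qed.

Lemma is_derive_fan_potential (eta eta' q : R -> R) t xi :
  (forall xi, is_derive eta xi (eta' xi)) -> (forall xi, is_derive q xi (xi * eta' xi)) ->
  is_derive (fun xi => (xi * eta xi - q xi) * phi (xi * t) t) xi
    (eta xi * phi (xi * t) t + (xi * eta xi - q xi) * (t * phix (xi * t) t)).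
Proof.
  intros De Dq. apply is_derive_Reals.
  replace (eta xi * phi (xi * t) t + (xi * eta xi - q xi) * (t * phix (xi * t) t))
    with ((1 * eta xi + xi * eta' xi - xi * eta' xi) * phi (xi * t) t
          + (xi * eta xi - q xi) * (phix (xi * t) t * t)) by ring.
  apply (derivable_pt_lim_mult (fun xi => xi * eta xi - q xi) (fun xi => phi (xi * t) t)).
  - apply (derivable_pt_lim_minus (fun xi => xi * eta xi) q); [| apply is_derive_Reals, Dq].
    apply (derivable_pt_lim_mult (fun xi => xi) eta);
      [apply derivable_pt_lim_id | apply is_derive_Reals, De].
  - apply (derivable_pt_lim_comp (fun xi => xi * t) (fun y => phi y t)); [| apply (tf_dx T)].
    apply is_derive_Reals. auto_derive; [exact I | ring].
Qed.

(* In the variables (xi, t) with x = xi t, and using q' = xi eta',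
     t (eta phi_t + q phi_x) = d/dt (t eta phi) + d/dxi ((q - xi eta) phi),
   where phi and its partials are evaluated at (xi t, t).  The xi-derivative
   leaves boundary terms on the two rays and the t-derivative integrates to zero. *)
Lemma RInt_fan_flux_xi eta eta' q al be t :
  (forall xi, is_derive eta xi (eta' xi)) -> (forall xi, is_derive q xi (xi * eta' xi)) ->
  RInt (fun xi => t * (eta xi * phit (xi * t) t + q xi * phix (xi * t) t)) al be
  = RInt (fun xi => eta xi * (phi (xi * t) t + t * (xi * phix (xi * t) t + phit (xi * t) t)))
      al be
    - ((be * eta be - q be) * phi (be * t) t - (al * eta al - q al) * phi (al * t) t).
Proof.
  intros De Dq.
  pose proof (continuity_pt_of_is_derive _ _ De) as Ceta.
  pose proof (continuity_pt_of_is_derive _ _ Dq) as Cq.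
  set (dh := fun xi t =>
    eta xi * phi (xi * t) t + (xi * eta xi - q xi) * (t * phix (xi * t) t)).
  assert (Cdh : continuity_2d dh) by (unfold dh; continuity_2d).
  rewrite (RInt_ext _ (fun xi =>
      eta xi * (phi (xi * t) t + t * (xi * phix (xi * t) t + phit (xi * t) t)) - dh xi t))
    by (intros x _; unfold dh; field_R).
  rewrite (RInt_minus (V := R_CompleteNormedModule));
    [| apply (ex_RInt_of_continuity_2d (fun xi t =>
         eta xi * (phi (xi * t) t + t * (xi * phix (xi * t) t + phit (xi * t) t))));
       continuity_2d
     | apply ex_RInt_of_continuity_2d, Cdh].
  replace (RInt (fun xi => dh xi t) al be)
    with ((be * eta be - q be) * phi (be * t) t - (al * eta al - q al) * phi (al * t) t);
    [reflexivity |].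
  symmetry. apply is_RInt_unique.
  apply (is_RInt_derive (V := R_CompleteNormedModule)
           (fun xi => (xi * eta xi - q xi) * phi (xi * t) t) (fun xi => dh xi t)).
  - intros x _. apply (is_derive_fan_potential eta eta' q); assumption.
  - intros x _. apply continuity_pt_filterlim, continuity_pt_fst, Cdh.
Qed.

Lemma fan_flux_integral eta q al be :
  self_similar_pair eta q ->
  RInt (fun t => RInt (fun xi => t * (eta xi * phit (xi * t) t + q xi * phix (xi * t) t))
                   al be) T1 T2
  = relative_flux q eta be * ray_integral be - relative_flux q eta al * ray_integral al.
Proof.
  intros [eta' Hd].
  assert (De : forall xi, is_derive eta xi (eta' xi)) by (intros; apply Hd).
  assert (Dq : forall xi, is_derive q xi (xi * eta' xi)) by (intros; apply Hd).
  pose proof (continuity_pt_of_is_derive _ _ De) as Ceta.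
  pose proof (continuity_pt_of_is_derive _ _ Dq) as Cq.
  rewrite (RInt_ext _ _ _ _ (fun t _ => RInt_fan_flux_xi eta eta' q al be t De Dq)).
  set (K := fun xi t => t * eta xi * phi (xi * t) t).
  set (dK := fun xi t =>
    eta xi * (phi (xi * t) t + t * (xi * phix (xi * t) t + phit (xi * t) t))).
  set (h := fun xi t => (xi * eta xi - q xi) * phi (xi * t) t).
  assert (CK : continuity_2d K) by (unfold K; continuity_2d).
  assert (CdK : continuity_2d dK) by (unfold dK; continuity_2d).
  assert (Eh : forall s, ex_RInt (fun t => h s t) T1 T2)
    by (intros; apply ex_RInt_of_continuity_2d_snd; unfold h; continuity_2d).
  change (RInt (fun t => RInt (fun xi => dK xi t) al be - (h be t - h al t)) T1 T2
          = relative_flux q eta be * ray_integral be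
            - relative_flux q eta al * ray_integral al).
  rewrite (RInt_minus (V := R_CompleteNormedModule));
    [| apply ex_RInt_RInt_param, CdK | apply (ex_RInt_minus (V := R_NormedModule)); apply Eh].
  rewrite (RInt_minus (V := R_CompleteNormedModule)) by apply Eh.
  rewrite (RInt_RInt_derive_snd K dK) by (try assumption; intros; apply is_derive_fan_weight).
  assert (K0 : forall s, (s <= T1 \/ T2 <= s) -> RInt (fun xi => K xi s) al be = 0).
  { intros s Hs. apply RInt_eq_0. intros x _. unfold K.
    destruct (tf_supp T (x * s) s) as [-> _]; [tauto | ring]. }
  rewrite (K0 T1), (K0 T2) by lra.
  assert (Hh : forall s, RInt (fun t => h s t) T1 T2 = (s * eta s - q s) * ray_integral s).
  { intros s. apply (RInt_scal (V := R_CompleteNormedModule)).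
    apply (ex_RInt_of_continuity_2d_snd (fun xi t => phi (xi * t) t)). continuity_2d. }
  rewrite !Hh. unfold relative_flux, minus, plus, opp. simpl. ring.
Qed.

Lemma ray_integral_out s :
  (forall t, T1 <= t <= T2 -> s * t < a \/ b < s * t) -> ray_integral s = 0.
Proof.
  intros H. apply RInt_eq_0. intros t Ht. rewrite Rmin_left, Rmax_right in Ht by lra.
  apply (tf_supp T). destruct (H t ltac:(lra)); [left | right; left]; lra.
Qed.

Lemma ray_integral_continuous s : continuity_pt ray_integral s.
Proof.
  apply continuity_pt_filterlim.
  apply (RInt_param_continuous (fun t s => phi (s * t) t)).
  apply (continuity_2d_swap (fun s t => phi (s * t) t)). continuity_2d.
Qed.

Lemma is_derive_fan_mass s : is_derive fan_mass s (weighted_ray_integral s).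
Proof.
  assert (Ck : continuity_2d (fun xi t => t * phi (xi * t) t)) by continuity_2d.
  apply (is_derive_RInt_param_2d (fun t s => RInt (fun xi => t * phi (xi * t) t) 0 s)
                                 (fun t s => t * phi (s * t) t)).
  - intros s'. apply ex_RInt_RInt_param, Ck.
  - apply (continuity_2d_swap (fun s t => t * phi (s * t) t)), Ck.
  - intros t s'. apply (is_derive_RInt (fun xi => t * phi (xi * t) t) _ 0 s').
    + apply filter_forall. intros s''.
      apply (RInt_correct (V := R_CompleteNormedModule)).
      apply (ex_RInt_of_continuity_2d (fun xi t => t * phi (xi * t) t)), Ck.
    + apply continuity_pt_filterlim, (continuity_pt_fst (fun xi t => t * phi (xi * t) t)), Ck.
Qed.

Lemma fan_integral_const k al be :
  fan_integral (fun _ => k) al be = k * (fan_mass be - fan_mass al).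
Proof.
  assert (Ck : continuity_2d (fun xi t => t * phi (xi * t) t)) by continuity_2d.
  assert (Ex : forall al be t, ex_RInt (fun xi => t * phi (xi * t) t) al be)
    by (intros; apply (ex_RInt_of_continuity_2d (fun xi t => t * phi (xi * t) t)), Ck).
  unfold fan_integral, fan_mass.
  rewrite (RInt_ext _ (fun t => k * (RInt (fun xi => t * phi (xi * t) t) 0 be
                                   - RInt (fun xi => t * phi (xi * t) t) 0 al))).
  - rewrite (RInt_scal (V := R_CompleteNormedModule))
      by (apply (ex_RInt_minus (V := R_NormedModule)); apply ex_RInt_RInt_param, Ck).
    rewrite (RInt_minus (V := R_CompleteNormedModule)) by apply ex_RInt_RInt_param, Ck.
    reflexivity.
  - intros t _.
    rewrite (RInt_ext _ (fun xi => k * (t * phi (xi * t) t))) by (intros; field_R).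
    rewrite (RInt_scal (V := R_CompleteNormedModule)) by apply Ex.
    rewrite <- (RInt_Chasles (V := R_CompleteNormedModule) _ 0 al be) by apply Ex.
    unfold plus, scal; simpl; unfold mult; simpl. ring.
Qed.

Lemma int_pos_weighted_ray_integral s :
  int_pos (fun t => t * phi (s * t) t) (weighted_ray_integral s).
Proof.
  exists T1, T2. split; [exact HT1 |]. split; [exact HT12 |]. split.
  - intros t Ht H. destruct (tf_supp T (s * t) t) as [-> _]; [lra | ring].
  - apply int_ab_of_is_RInt, (RInt_correct (V := R_CompleteNormedModule)).
    apply (ex_RInt_of_continuity_2d_snd (fun xi t => t * phi (xi * t) t)). continuity_2d.
Qed.

Lemma fan_flux_decomposition (c f : R -> R -> R) s0 s1 s2 s3 s4 s5
    (e1 q1 e2 q2 e3 q3 e4 q4 e5 q5 : R -> R) :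
  s0 <= s1 -> s1 <= s2 -> s2 <= s3 -> s3 <= s4 -> s4 <= s5 ->
  (forall t, T1 <= t <= T2 -> s0 * t < a /\ b < s5 * t) ->
  self_similar_pair e1 q1 -> self_similar_pair e2 q2 -> self_similar_pair e3 q3 ->
  self_similar_pair e4 q4 -> self_similar_pair e5 q5 ->
  (forall t xi, 0 < t -> xi < s1 -> c (xi * t) t = e1 xi /\ f (xi * t) t = q1 xi) ->
  (forall t xi, 0 < t -> s1 < xi < s2 -> c (xi * t) t = e2 xi /\ f (xi * t) t = q2 xi) ->
  (forall t xi, 0 < t -> s2 < xi < s3 -> c (xi * t) t = e3 xi /\ f (xi * t) t = q3 xi) ->
  (forall t xi, 0 < t -> s3 < xi < s4 -> c (xi * t) t = e4 xi /\ f (xi * t) t = q4 xi) ->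
  (forall t xi, 0 < t -> s4 < xi -> c (xi * t) t = e5 xi /\ f (xi * t) t = q5 xi) ->
  dbl_int (fun x t => c x t * phit x t + f x t * phix x t)
    ((relative_flux q1 e1 s1 - relative_flux q2 e2 s1) * ray_integral s1
     + (relative_flux q2 e2 s2 - relative_flux q3 e3 s2) * ray_integral s2
     + (relative_flux q3 e3 s3 - relative_flux q4 e4 s3) * ray_integral s3
     + (relative_flux q4 e4 s4 - relative_flux q5 e5 s4) * ray_integral s4).
Proof.
  intros H01 H12 H23 H34 H45 Hs S1 S2 S3 S4 S5 M1 M2 M3 M4 M5.
  destruct (self_similar_pair_continuous _ _ S1).
  destruct (self_similar_pair_continuous _ _ S2).
  destruct (self_similar_pair_continuous _ _ S3).
  destruct (self_similar_pair_continuous _ _ S4).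
  destruct (self_similar_pair_continuous _ _ S5).
  assert (R0 : ray_integral s0 = 0)
    by (apply ray_integral_out; intros t Ht; left; apply Hs, Ht).
  assert (R5 : ray_integral s5 = 0)
    by (apply ray_integral_out; intros t Ht; right; apply Hs, Ht).
  apply (dbl_int_val _
    ((relative_flux q1 e1 s1 * ray_integral s1 - relative_flux q1 e1 s0 * ray_integral s0)
     + (relative_flux q2 e2 s2 * ray_integral s2 - relative_flux q2 e2 s1 * ray_integral s1)
     + (relative_flux q3 e3 s3 * ray_integral s3 - relative_flux q3 e3 s2 * ray_integral s2)
     + (relative_flux q4 e4 s4 * ray_integral s4 - relative_flux q4 e4 s3 * ray_integral s3)
     + (relative_flux q5 e5 s5 * ray_integral s5 - relative_flux q5 e5 s4 * ray_integral s4)));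
    [| rewrite R0, R5; ring].
  rewrite <- (fan_flux_integral e1 q1 s0 s1 S1), <- (fan_flux_integral e2 q2 s1 s2 S2),
    <- (fan_flux_integral e3 q3 s2 s3 S3), <- (fan_flux_integral e4 q4 s3 s4 S4),
    <- (fan_flux_integral e5 q5 s4 s5 S5).
  apply fan_decomposition with (s1 := s1) (s2 := s2) (s3 := s3) (s4 := s4); try assumption.
  - intros x t Ht Hx. destruct (tf_supp T x t) as [_ [-> ->]]; [lra | ring].
  all: try continuity_2d.
  all: intros t xi Ht Hxi.
  - destruct (M1 t xi) as [-> ->]; [lra | lra | ring].
  - destruct (M2 t xi) as [-> ->]; [lra | lra | ring].
  - destruct (M3 t xi) as [-> ->]; [lra | lra | ring].
  - destruct (M4 t xi) as [-> ->]; [lra | lra | ring].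
  - destruct (M5 t xi) as [-> ->]; [lra | lra | ring].
Qed.

Lemma fan_density_decomposition (c : R -> R -> R) s0 s1 s2 s3 s4 s5
    (g1 g2 g3 g4 g5 : R -> R) :
  s0 <= s1 -> s1 <= s2 -> s2 <= s3 -> s3 <= s4 -> s4 <= s5 ->
  (forall t, T1 <= t <= T2 -> s0 * t < a /\ b < s5 * t) ->
  (forall z, continuity_pt g1 z) -> (forall z, continuity_pt g2 z) ->
  (forall z, continuity_pt g3 z) -> (forall z, continuity_pt g4 z) ->
  (forall z, continuity_pt g5 z) ->
  (forall t xi, 0 < t -> xi < s1 -> c (xi * t) t = g1 xi) ->
  (forall t xi, 0 < t -> s1 < xi < s2 -> c (xi * t) t = g2 xi) ->
  (forall t xi, 0 < t -> s2 < xi < s3 -> c (xi * t) t = g3 xi) ->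
  (forall t xi, 0 < t -> s3 < xi < s4 -> c (xi * t) t = g4 xi) ->
  (forall t xi, 0 < t -> s4 < xi -> c (xi * t) t = g5 xi) ->
  dbl_int (fun x t => c x t * phi x t)
    (fan_integral g1 s0 s1 + fan_integral g2 s1 s2 + fan_integral g3 s2 s3
     + fan_integral g4 s3 s4 + fan_integral g5 s4 s5).
Proof.
  intros H01 H12 H23 H34 H45 Hs G1 G2 G3 G4 G5 M1 M2 M3 M4 M5.
  apply fan_decomposition; try assumption.
  - intros x t Ht Hx. destruct (tf_supp T x t) as [-> _]; [lra | ring].
  all: try continuity_2d.
  all: intros t xi Ht Hxi.
  - rewrite (M1 t xi); [reflexivity | lra | lra].
  - rewrite (M2 t xi); [reflexivity | lra | lra].
  - rewrite (M3 t xi); [reflexivity | lra | lra].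
  - rewrite (M4 t xi); [reflexivity | lra | lra].
  - rewrite (M5 t xi); [reflexivity | lra | lra].
Qed.

End Fan.

(** * The shadow wave *)

Lemma dbl_int_ext F G I :
  (forall x t, 0 < t -> F x t = G x t) -> dbl_int F I -> dbl_int G I.
Proof.
  intros E [a [b [T1 [T2 [Hab [HT1 [HT12 [Hz [g [Hg Hi]]]]]]]]]].
  exists a, b, T1, T2. split; [exact Hab |]. split; [exact HT1 |]. split; [exact HT12 |].
  split; [intros x t Ht H; rewrite <- E by exact Ht; apply Hz; auto |].
  exists g. split; [| exact Hi]. intros t Ht.
  replace (fun x => G x t) with (fun x => F x t) by (extensionality x; apply E; lra).
  apply Hg, Ht.
Qed.

Lemma residual_to0_ext c f c' f' :
  (forall e x t, 0 < e < 1 -> 0 < t -> c e x t = c' e x t /\ f e x t = f' e x t) ->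
  residual_to0 c' f' -> residual_to0 c f.
Proof.
  intros E H phi phix phit Htf Dx Dt.
  destruct (H phi phix phit Htf Dx Dt) as [I [HI Hlim]].
  exists I. split; [| exact Hlim]. intros e He.
  apply (dbl_int_ext (fun x t => c' e x t * phit x t + f' e x t * phix x t)); [| apply HI, He].
  intros x t Ht. destruct (E e x t He Ht) as [-> ->]. reflexivity.
Qed.

Lemma dconv_ext c c' (Tp Tp' : (R -> R -> R) -> R -> Prop) :
  (forall e x t, 0 < e < 1 -> 0 < t -> c e x t = c' e x t) ->
  (forall phi L, Tp' phi L -> Tp phi L) ->
  dconv c' Tp' -> dconv c Tp.
Proof.
  intros E HT H phi Htf. destruct (H phi Htf) as [I [L [HI [HL Hlim]]]].
  exists I, L. split; [| split; [apply HT, HL | exact Hlim]].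
  intros e He. apply (dbl_int_ext (fun x t => c' e x t * phi x t)); [| apply HI, He].
  intros x t Ht. rewrite E by assumption. reflexivity.
Qed.

Lemma fun_pair_of_fun_delta_pair g cl cr phi L :
  fun_delta_pair g 0 cl 0 cr phi L -> fun_pair g phi L.
Proof.
  intros [A [B [C [HA [_ [_ ->]]]]]]. unfold fun_pair.
  replace (A + 0 * B + 0 * C) with A by ring. exact HA.
Qed.

Ltac pw5_case := unfold pw5; repeat destruct Rlt_dec; try reflexivity; exfalso; nra.

Lemma pw5_left ul ur e xi t A B C D E :
  0 < t -> xi < ul - e -> pw5 ul ur e (xi * t) t A B C D E = A.
Proof. intros. pw5_case. Qed.

Lemma pw5_left_shadow ul ur e xi t A B C D E :
  0 < t -> ul - e < xi < ul -> pw5 ul ur e (xi * t) t A B C D E = B.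
Proof. intros. pw5_case. Qed.

Lemma pw5_fan ul ur e xi t A B C D E :
  0 < t -> 0 < e -> ul < xi < ur -> pw5 ul ur e (xi * t) t A B C D E = C.
Proof. intros. pw5_case. Qed.

Lemma pw5_right_shadow ul ur e xi t A B C D E :
  0 < t -> ul < ur -> ur < xi < ur + e -> pw5 ul ur e (xi * t) t A B C D E = D.
Proof. intros. pw5_case. Qed.

Lemma pw5_right ul ur e xi t A B C D E :
  0 < t -> 0 < e -> ul < ur -> ur + e < xi -> pw5 ul ur e (xi * t) t A B C D E = E.
Proof. intros. pw5_case. Qed.

Ltac pw5_sector :=
  first [ rewrite !pw5_left by lra | rewrite !pw5_left_shadow by lra
        | rewrite !pw5_fan by lra | rewrite !pw5_right_shadow by lra
        | rewrite !pw5_right by lra ].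

Lemma pw5_initial_left ul ur e x : 0 < e -> x < 0 ->
  exists t0, 0 < t0 /\ forall t, 0 < t < t0 ->
    forall A B C D E, pw5 ul ur e x t A B C D E = A.
Proof.
  intros He Hx. pose proof (Rabs_pos (ul - e)); pose proof (Rabs_maj2 (ul - e)).
  exists (- x / (Rabs (ul - e) + 1)). split; [apply Rdiv_lt_0_compat; lra |].
  intros t Ht A B C D E.
  assert ((Rabs (ul - e) + 1) * t < - x).
  { apply Rlt_le_trans with ((Rabs (ul - e) + 1) * (- x / (Rabs (ul - e) + 1)));
      [apply Rmult_lt_compat_l; lra | right; field; lra]. }
  unfold pw5. destruct (Rlt_dec x ((ul - e) * t)) as [| Hn]; [reflexivity | exfalso; nra].
Qed.

Lemma pw5_initial_right ul ur e x : 0 < e -> ul < ur -> 0 < x ->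
  exists t0, 0 < t0 /\ forall t, 0 < t < t0 ->
    forall A B C D E, pw5 ul ur e x t A B C D E = E.
Proof.
  intros He Hlr Hx. pose proof (Rabs_pos (ur + e)); pose proof (Rle_abs (ur + e)).
  exists (x / (Rabs (ur + e) + 1)). split; [apply Rdiv_lt_0_compat; lra |].
  intros t Ht A B C D E.
  assert ((Rabs (ur + e) + 1) * t < x).
  { apply Rlt_le_trans with ((Rabs (ur + e) + 1) * (x / (Rabs (ur + e) + 1)));
      [apply Rmult_lt_compat_l; lra | right; field; lra]. }
  unfold pw5. repeat destruct Rlt_dec; try reflexivity; exfalso; nra.
Qed.

(* The masses beta / e and delta / e on sectors of angular width e converge to
   t-weighted Dirac masses on the rays x = ul t and x = ur t. *)
Lemma shadow_density_limit ul ur A beta delta E (creg : R -> R -> R) : ul < ur ->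
  (forall t xi, 0 < t -> xi < ul -> creg (xi * t) t = A) ->
  (forall t xi, 0 < t -> ul < xi < ur -> creg (xi * t) t = 0) ->
  (forall t xi, 0 < t -> ur < xi -> creg (xi * t) t = E) ->
  dconv (fun e x t => pw5 ul ur e x t A (beta / e) 0 (delta / e) E)
        (fun_delta_pair creg beta ul delta ur).
Proof.
  intros Hlr HA H0 HE phi Htf.
  destruct (test_funE phi Htf) as [phix [phit [a [b [T1 [T2 T]]]]]].
  destruct (fan_bounds a b T1 T2 (ul - 1) (ur + 1) (tf_T1 T) (tf_T12 T))
    as [s0 [s5 [Hs0 [Hs5 Hs]]]].
  set (M := fan_mass phi T1 T2). set (W := weighted_ray_integral phi T1 T2).
  assert (DM : forall s, is_derive M s (W s)) by (intros; eapply is_derive_fan_mass, T).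
  exists (fun e => A * (M (ul - e) - M s0) + beta / e * (M ul - M (ul - e))
                   + delta / e * (M (ur + e) - M ur) + E * (M s5 - M (ur + e))).
  exists (A * (M ul - M s0) + beta * W ul + delta * W ur + E * (M s5 - M ur)).
  split; [| split].
  - intros e He. eapply dbl_int_val.
    + apply (fan_density_decomposition phi phix phit a b T1 T2 T _ s0 (ul - e) ul ur (ur + e) s5
        (fun _ => A) (fun _ => beta / e) (fun _ => 0) (fun _ => delta / e) (fun _ => E));
        try lra; try exact Hs; try apply continuity_pt_const_fun;
        intros t xi Ht Hxi; pw5_sector; reflexivity.
    + rewrite !(fan_integral_const phi phix phit a b T1 T2 T). fold M. ring.
  - exists (A * (M ul - M s0) + E * (M s5 - M ur)), (W ul), (W ur).
    split; [| split; [| split]].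
    + eapply dbl_int_val.
      * apply (fan_density_decomposition phi phix phit a b T1 T2 T _ s0 ul ul ur ur s5
          (fun _ => A) (fun _ => 0) (fun _ => 0) (fun _ => 0) (fun _ => E));
          try lra; try exact Hs; try apply continuity_pt_const_fun;
          intros t xi Ht Hxi; try lra; auto.
      * rewrite !(fan_integral_const phi phix phit a b T1 T2 T). fold M. ring.
    + eapply int_pos_weighted_ray_integral, T.
    + eapply int_pos_weighted_ray_integral, T.
    + ring.
  - apply tends_shadow_masses, DM.
Qed.

Lemma Heav_pos y : 0 < y -> Heav y = 1.
Proof. intros. unfold Heav. destruct Rlt_dec; [reflexivity | lra]. Qed.

Lemma Heav_neg y : y < 0 -> Heav y = 0.
Proof. intros. unfold Heav. destruct Rlt_dec; [lra | reflexivity]. Qed.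

Ltac lim_case := repeat destruct Rlt_dec; try reflexivity; exfalso; nra.

Lemma u_lim_left ul ur xi t : 0 < t -> xi < ul -> u_lim ul ur (xi * t) t = ul.
Proof. intros. unfold u_lim. lim_case. Qed.

Lemma u_lim_fan ul ur xi t : 0 < t -> ul < xi < ur -> u_lim ul ur (xi * t) t = xi.
Proof. intros. unfold u_lim. repeat destruct Rlt_dec; try (exfalso; nra). field. lra. Qed.

Lemma u_lim_right ul ur xi t : 0 < t -> ul < ur -> ur < xi -> u_lim ul ur (xi * t) t = ur.
Proof. intros. unfold u_lim. lim_case. Qed.

Lemma v_lim_left ul ur vl vr xi t : 0 < t -> xi < ul -> v_lim ul ur vl vr (xi * t) t = vl.
Proof. intros. unfold v_lim. lim_case. Qed.

Lemma v_lim_fan ul ur vl vr xi t :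
  0 < t -> ul < xi < ur -> v_lim ul ur vl vr (xi * t) t = 0.
Proof. intros. unfold v_lim. lim_case. Qed.

Lemma v_lim_right ul ur vl vr xi t :
  0 < t -> ul < ur -> ur < xi -> v_lim ul ur vl vr (xi * t) t = vr.
Proof. intros. unfold v_lim. lim_case. Qed.

Lemma w_reg_left ul ur wl wr xi t :
  0 < t -> ul < ur -> xi < ul -> w_reg ul ur wl wr (xi * t) t = wl.
Proof. intros. unfold w_reg. rewrite Heav_pos, Heav_neg by nra. ring. Qed.

Lemma w_reg_fan ul ur wl wr xi t :
  0 < t -> ul < xi < ur -> w_reg ul ur wl wr (xi * t) t = 0.
Proof. intros. unfold w_reg. rewrite !Heav_neg by nra. ring. Qed.

Lemma w_reg_right ul ur wl wr xi t :
  0 < t -> ul < ur -> ur < xi -> w_reg ul ur wl wr (xi * t) t = wr.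
Proof. intros. unfold w_reg. rewrite Heav_neg, Heav_pos by nra. ring. Qed.

Definition entropy (etab : R -> R) (c1 c2 c3 u v w z : R) : R :=
  etab u + c1 * v + c2 * w + c3 * z.

Definition entropy_flux (qb : R -> R) (c1 c2 c3 u v w z : R) : R :=
  qb u + c1 * (u * v) + c2 * (v ^ 2 / 2 + u * w) + c3 * (v * w + u * z).

Section ShadowWave.

Variables (ul ur vl vr wl wr zl zr : R).
Hypothesis Hlr : ul < ur.

Local Notation u := (u_eps ul ur).
Local Notation v := (v_eps ul ur vl vr).
Local Notation w := (w_eps ul ur vl vr wl wr).
Local Notation z := (z_eps ul ur vl vr wl wr zl zr).

Lemma shadow_initial_left e x : 0 < e < 1 -> x < 0 -> exists t0, 0 < t0 /\
  forall t, 0 < t < t0 -> u e x t = ul /\ v e x t = vl /\ w e x t = wl /\ z e x t = zl.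
Proof.
  intros He Hx. destruct (pw5_initial_left ul ur e x) as [t0 [Ht0 H]]; [lra | exact Hx |].
  exists t0. split; [exact Ht0 |]. intros t Ht. repeat split; apply H, Ht.
Qed.

Lemma shadow_initial_right e x : 0 < e < 1 -> 0 < x -> exists t0, 0 < t0 /\
  forall t, 0 < t < t0 -> u e x t = ur /\ v e x t = vr /\ w e x t = wr /\ z e x t = zr.
Proof.
  intros He Hx.
  destruct (pw5_initial_right ul ur e x) as [t0 [Ht0 H]]; [lra | exact Hlr | exact Hx |].
  exists t0. split; [exact Ht0 |]. intros t Ht. repeat split; apply H, Ht.
Qed.

Section EntropyPair.

Variables (etab etab' qb : R -> R) (c1 c2 c3 : R).
Hypotheses (Detab : forall s, is_derive etab s (etab' s))
           (Dqb : forall s, is_derive qb s (s * etab' s)).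

Local Notation eta := (entropy etab c1 c2 c3).
Local Notation q := (entropy_flux qb c1 c2 c3).

Lemma self_similar_pair_rarefaction :
  self_similar_pair (fun xi => eta xi 0 0 0) (fun xi => q xi 0 0 0).
Proof.
  exists etab'. intros xi. split.
  - apply (is_derive_ext etab); [intros s; cbv beta; unfold entropy; field_R | apply Detab].
  - apply (is_derive_ext qb); [intros s; cbv beta; unfold entropy_flux; field_R | apply Dqb].
Qed.

(* On the rarefaction the state is (xi, 0, 0, 0), an exact self-similar solution,
   and across the rays xi = ul, ur the shadow states satisfy the Rankine-Hugoniot
   conditions exactly; only the rays ul - e and ur + e carry an O(e) defect. *)
Lemma shadow_entropy_integral phi phix phit a b T1 T2 e :
  test_fun_on phi phix phit a b T1 T2 -> 0 < e ->
  dbl_int (fun x t => eta (u e x t) (v e x t) (w e x t) (z e x t) * phit x t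
                    + q (u e x t) (v e x t) (w e x t) (z e x t) * phix x t)
    (e * ((c1 * vl + c2 * wl + c3 * zl) * ray_integral phi T1 T2 (ul - e)
          + (c1 * vr + c2 * wr + c3 * zr) * ray_integral phi T1 T2 (ur + e))).
Proof.
  intros T He.
  destruct (fan_bounds a b T1 T2 (ul - e) (ur + e) (tf_T1 T) (tf_T12 T))
    as [s0 [s5 [H0 [H5 Hs]]]].
  eapply dbl_int_val.
  - apply (fan_flux_decomposition phi phix phit a b T1 T2 T
      (fun x t => eta (u e x t) (v e x t) (w e x t) (z e x t))
      (fun x t => q (u e x t) (v e x t) (w e x t) (z e x t)) s0 (ul - e) ul ur (ur + e) s5
      (fun _ => eta ul vl wl zl) (fun _ => q ul vl wl zl)
      (fun _ => eta ul 0 (vl ^ 2 / (2 * e)) (vl * wl / e))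
      (fun _ => q ul 0 (vl ^ 2 / (2 * e)) (vl * wl / e))
      (fun xi => eta xi 0 0 0) (fun xi => q xi 0 0 0)
      (fun _ => eta ur 0 (- (vr ^ 2 / (2 * e))) (- (vr * wr / e)))
      (fun _ => q ur 0 (- (vr ^ 2 / (2 * e))) (- (vr * wr / e)))
      (fun _ => eta ur vr wr zr) (fun _ => q ur vr wr zr)).
    1-5: lra.
    1: exact Hs.
    1, 2, 4, 5: apply self_similar_pair_const.
    1: apply self_similar_pair_rarefaction.
    1-5: intros t xi Ht Hxi; unfold u_eps, v_eps, w_eps, z_eps; pw5_sector;
      try (replace (xi * t / t) with xi by (field; lra)); split; reflexivity.
  - unfold relative_flux, entropy, entropy_flux. field. lra.
Qed.

Lemma shadow_entropy_residual :
  residual_to0 (fun e x t => eta (u e x t) (v e x t) (w e x t) (z e x t))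
               (fun e x t => q (u e x t) (v e x t) (w e x t) (z e x t)).
Proof.
  intros phi phix phit Htf Dx Dt.
  destruct (test_fun_onE phi phix phit Htf Dx Dt) as [a [b [T1 [T2 T]]]].
  set (P := ray_integral phi T1 T2).
  exists (fun e => e * ((c1 * vl + c2 * wl + c3 * zl) * P (ul - e)
                        + (c1 * vr + c2 * wr + c3 * zr) * P (ur + e))).
  split;
    [intros e He; apply (shadow_entropy_integral phi phix phit a b T1 T2); [exact T | lra] |].
  replace 0 with (0 * ((c1 * vl + c2 * wl + c3 * zl) * P ul
                       + (c1 * vr + c2 * wr + c3 * zr) * P ur)) by ring.
  apply tends_mult; [apply tends_id |].
  apply tends_plus; apply tends_scal.
  - apply (tends_ext _ (fun e => P (ul + -1 * e))); [intros; f_equal; ring |].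
    apply tends_shift, (ray_integral_continuous phi phix phit a b T1 T2 T).
  - apply (tends_ext _ (fun e => P (ur + 1 * e))); [intros; f_equal; ring |].
    apply tends_shift, (ray_integral_continuous phi phix phit a b T1 T2 T).
Qed.

End EntropyPair.

Lemma u_eps_eq_u_lim e x t : 0 < e -> 0 < t -> u e x t = u_lim ul ur x t.
Proof.
  intros. unfold u_eps, pw5, u_lim. repeat destruct Rlt_dec; try reflexivity; exfalso; nra.
Qed.

Lemma shadow_u_dconv : dconv u (fun_pair (u_lim ul ur)).
Proof.
  intros phi Htf.
  destruct (test_funE phi Htf) as [phix [phit [a [b [T1 [T2 T]]]]]].
  destruct (fan_bounds a b T1 T2 ul ur (tf_T1 T) (tf_T12 T)) as [s0 [s5 [Hs0 [Hs5 Hs]]]].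
  assert (H : dbl_int (fun x t => u_lim ul ur x t * phi x t)
    (fan_integral phi T1 T2 (fun _ => ul) s0 ul + fan_integral phi T1 T2 (fun _ => 0) ul ul
     + fan_integral phi T1 T2 (fun xi => xi) ul ur + fan_integral phi T1 T2 (fun _ => 0) ur ur
     + fan_integral phi T1 T2 (fun _ => ur) ur s5)).
  { apply (fan_density_decomposition phi phix phit a b T1 T2 T _ s0 ul ul ur ur s5);
      try lra; try exact Hs; try apply continuity_pt_const_fun; try apply continuity_pt_id;
      intros t xi Ht Hxi; try lra.
    - apply u_lim_left; lra.
    - apply u_lim_fan; lra.
    - apply u_lim_right; lra. }
  eexists; eexists; split; [| split; [exact H | apply tends_const]].
  intros e He. apply (dbl_int_ext (fun x t => u_lim ul ur x t * phi x t)); [| exact H].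
  intros x t Ht. rewrite u_eps_eq_u_lim by lra. reflexivity.
Qed.

Lemma shadow_v_dconv : dconv v (fun_pair (v_lim ul ur vl vr)).
Proof.
  apply (dconv_ext _ (fun e x t => pw5 ul ur e x t vl (0 / e) 0 (0 / e) vr)
                   _ (fun_delta_pair (v_lim ul ur vl vr) 0 ul 0 ur)).
  - intros e x t He Ht. unfold v_eps. unfold Rdiv. rewrite Rmult_0_l. reflexivity.
  - intros phi L. apply fun_pair_of_fun_delta_pair.
  - apply shadow_density_limit; [exact Hlr | intros; apply v_lim_left; lra
    | intros; apply v_lim_fan; lra | intros; apply v_lim_right; lra].
Qed.

Lemma shadow_w_dconv : dconv w (fun_delta_pair (w_reg ul ur wl wr)
                                  (vl ^ 2 / 2) ul (- (vr ^ 2 / 2)) ur).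
Proof.
  apply (dconv_ext _
           (fun e x t => pw5 ul ur e x t wl (vl ^ 2 / 2 / e) 0 (- (vr ^ 2 / 2) / e) wr)
                   _ (fun_delta_pair (w_reg ul ur wl wr) (vl ^ 2 / 2) ul (- (vr ^ 2 / 2)) ur));
    [| intros; assumption |].
  - intros e x t He Ht. unfold w_eps. f_equal; field; lra.
  - apply shadow_density_limit; [exact Hlr | intros; apply w_reg_left; lra
    | intros; apply w_reg_fan; lra | intros; apply w_reg_right; lra].
Qed.

Lemma shadow_z_dconv : dconv z (fun_delta_pair (z_reg ul ur zl zr)
                                  (vl * wl) ul (- (vr * wr)) ur).
Proof.
  apply (dconv_ext _ (fun e x t => pw5 ul ur e x t zl (vl * wl / e) 0 (- (vr * wr) / e) zr)
                   _ (fun_delta_pair (z_reg ul ur zl zr) (vl * wl) ul (- (vr * wr)) ur));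
    [| intros; assumption |].
  - intros e x t He Ht. unfold z_eps. f_equal; field; lra.
  - apply shadow_density_limit; [exact Hlr | intros; apply w_reg_left; lra
    | intros; apply w_reg_fan; lra | intros; apply w_reg_right; lra].
Qed.

End ShadowWave.

(* Each conservation law of the system is the entropy pair (etab, qb) = (0, 0)
   or (u, u^2/2) with the appropriate constants c1, c2, c3; the states not
   involved in it are irrelevant and set to 0. *)
Lemma shadow_u_residual ul ur : ul < ur ->
  residual_to0 (u_eps ul ur) (fun e x t => u_eps ul ur e x t ^ 2 / 2).
Proof.
  intros Hlr. eapply residual_to0_ext;
    [| apply (shadow_entropy_residual ul ur 0 0 0 0 0 0 Hlr
                (fun s => s) (fun _ => 1) (fun s => s ^ 2 / 2) 0 0 0);
       intros s; auto_derive; trivial; field].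
  intros e x t _ _. unfold entropy, entropy_flux. split; field.
Qed.

Lemma shadow_v_residual ul ur vl vr : ul < ur ->
  residual_to0 (v_eps ul ur vl vr) (fun e x t => u_eps ul ur e x t * v_eps ul ur vl vr e x t).
Proof.
  intros Hlr. eapply residual_to0_ext;
    [| apply (shadow_entropy_residual ul ur vl vr 0 0 0 0 Hlr
                (fun _ => 0) (fun _ => 0) (fun _ => 0) 1 0 0);
       intros s; auto_derive; trivial; field].
  intros e x t _ _. unfold entropy, entropy_flux. split; field.
Qed.

Lemma shadow_w_residual ul ur vl vr wl wr : ul < ur ->
  residual_to0 (w_eps ul ur vl vr wl wr)
    (fun e x t => v_eps ul ur vl vr e x t ^ 2 / 2
                  + u_eps ul ur e x t * w_eps ul ur vl vr wl wr e x t).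
Proof.
  intros Hlr. eapply residual_to0_ext;
    [| apply (shadow_entropy_residual ul ur vl vr wl wr 0 0 Hlr
                (fun _ => 0) (fun _ => 0) (fun _ => 0) 0 1 0);
       intros s; auto_derive; trivial; field].
  intros e x t _ _. unfold entropy, entropy_flux. split; field.
Qed.

Lemma shadow_z_residual ul ur vl vr wl wr zl zr : ul < ur ->
  residual_to0 (z_eps ul ur vl vr wl wr zl zr)
    (fun e x t => v_eps ul ur vl vr e x t * w_eps ul ur vl vr wl wr e x t
                  + u_eps ul ur e x t * z_eps ul ur vl vr wl wr zl zr e x t).
Proof.
  intros Hlr. eapply residual_to0_ext;
    [| apply (shadow_entropy_residual ul ur vl vr wl wr zl zr Hlr
                (fun _ => 0) (fun _ => 0) (fun _ => 0) 0 0 1);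
       intros s; auto_derive; trivial; field].
  intros e x t _ _. unfold entropy, entropy_flux. split; field.
Qed.

Theorem theorem5p3 (ul ur vl vr wl wr zl zr : R) (Hlr : ul < ur) :
  let u := u_eps ul ur in
  let v := v_eps ul ur vl vr in
  let w := w_eps ul ur vl vr wl wr in
  let z := z_eps ul ur vl vr wl wr zl zr in
  (forall e x, 0 < e < 1 -> x < 0 -> exists t0, 0 < t0 /\
     forall t, 0 < t < t0 ->
       u e x t = ul /\ v e x t = vl /\ w e x t = wl /\ z e x t = zl) /\
  (forall e x, 0 < e < 1 -> 0 < x -> exists t0, 0 < t0 /\
     forall t, 0 < t < t0 ->
       u e x t = ur /\ v e x t = vr /\ w e x t = wr /\ z e x t = zr) /\
  residual_to0 u (fun e x t => u e x t ^ 2 / 2) /\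
  residual_to0 v (fun e x t => u e x t * v e x t) /\
  residual_to0 w (fun e x t => v e x t ^ 2 / 2 + u e x t * w e x t) /\
  residual_to0 z (fun e x t => v e x t * w e x t + u e x t * z e x t) /\
  dconv u (fun_pair (u_lim ul ur)) /\
  dconv v (fun_pair (v_lim ul ur vl vr)) /\
  dconv w (fun_delta_pair (w_reg ul ur wl wr)
             (vl ^ 2 / 2) ul (- (vr ^ 2 / 2)) ur) /\
  dconv z (fun_delta_pair (z_reg ul ur zl zr)
             (vl * wl) ul (- (vr * wr)) ur) /\
  (forall (etab etab' qb : R -> R) (c1 c2 c3 : R),
     smooth1 etab -> convex etab ->
     (forall s, derivable_pt_lim etab s (etab' s)) ->
     (forall s, derivable_pt_lim qb s (s * etab' s)) ->
     forall phi phix phit,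
       test_fun phi -> is_dx phi phix -> is_dt phi phit ->
       (forall x t, 0 <= phi x t) ->
       exists I : R -> R,
         (forall e, 0 < e < 1 ->
            dbl_int (fun x t =>
              (etab (u e x t) + c1 * v e x t + c2 * w e x t + c3 * z e x t)
                * phit x t
              + (qb (u e x t) + c1 * (u e x t * v e x t)
                 + c2 * (v e x t ^ 2 / 2 + u e x t * w e x t)
                 + c3 * (v e x t * w e x t + u e x t * z e x t))
                * phix x t) (I e)) /\
         liminf_nonneg I).
Proof.
  cbv zeta.
  split; [intros; apply shadow_initial_left; assumption |].
  split; [intros; apply shadow_initial_right; assumption |].
  split; [apply shadow_u_residual; exact Hlr |].
  split; [apply shadow_v_residual; exact Hlr |].
  split; [apply shadow_w_residual; exact Hlr |].
  split; [apply shadow_z_residual; exact Hlr |].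
  split; [apply shadow_u_dconv; exact Hlr |].
  split; [apply shadow_v_dconv; exact Hlr |].
  split; [apply shadow_w_dconv; exact Hlr |].
  split; [apply shadow_z_dconv; exact Hlr |].
  intros etab etab' qb c1 c2 c3 _ _ Detab Dqb phi phix phit Htf Dx Dt _.
  destruct (shadow_entropy_residual ul ur vl vr wl wr zl zr Hlr etab etab' qb c1 c2 c3
              (fun s => proj2 (is_derive_Reals _ _ _) (Detab s))
              (fun s => proj2 (is_derive_Reals _ _ _) (Dqb s))
              phi phix phit Htf Dx Dt) as [I [HI Hlim]].
  exists I. split; [exact HI | apply liminf_nonneg_of_tends, Hlim].
Qed.
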